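(* Let $T$ be a $\mathbb{Z}_2^2$-cordial tree with $4k$ vertices for some $k\in\mathbb{N}$, and let $T^*$ be a tree containing $T$ as an induced subgraph with $|V(T^* )|\le 4k+3$. Then $T^*$ is $\mathbb{Z}_2^2$-cordial.
   Context: $\mathbb{N}=\mathbb{Z}_{\ge0}$. $\mathbb{Z}_2^2=\mathbb{Z}_2\times\mathbb{Z}_2$ is the Klein four-group. For an abelian group $A$ and a graph $G=(V,E)$, a vertex labeling $\ell:V\to A$ induces an edge labeling $\ell(\{v_1,v_2\})=\ell(v_1)+\ell(v_2)$. Let $f_V(a)=|\{v\in V:\ell(v)=a\}|$ and $f_E(a)=|\{e\in E:\ell(e)=a\}|$. The labeling is $A$-cordial if $|f_V(a_1)-f_V(a_2)|\le 1$ and $|f_E(a_1)-f_E(a_2)|\le 1$ for all $a_1,a_2\in A$; $G$ is $A$-cordial if it admits an $A$-cordial labeling. *)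

From HB Require Import structures.
From mathcomp Require Import all_boot all_order all_algebra.
Set Implicit Arguments. Unset Strict Implicit. Unset Printing Implicit Defensive.
Import GRing.Theory.
Local Open Scope ring_scope.

Definition simple_graph (V : finType) (e : rel V) : Prop :=
  irreflexive e /\ symmetric e.

Definition connected_graph (V : finType) (e : rel V) : Prop :=
  forall x y : V, connect e x y.

Definition has_cycle (V : finType) (e : rel V) : Prop :=
  exists s : seq V, [/\ 3 <= size s, uniq s & cycle e s]%N.

Definition is_tree (V : finType) (e : rel V) : Prop :=
  [/\ simple_graph e, connected_graph e & ~ has_cycle e].

Definition induced_subgraph (V W : finType) (e : rel V) (e' : rel W) : Prop :=
  exists f : V -> W, injective f /\ forall x y, e' (f x) (f y) = e x y.

Definition fV (A : zmodType) (V : finType) (l : V -> A) (a : A) : nat :=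
  #|[set v : V | l v == a]|.

(* number of (unordered) edges {x,y} with induced label l x + l y = a;
   each unordered edge is counted once via the ordering of enum_rank *)
Definition fE (A : zmodType) (V : finType) (e : rel V) (l : V -> A) (a : A)
  : nat :=
  #|[set p : V * V | [&& e p.1 p.2, (enum_rank p.1 < enum_rank p.2)%N
                      & l p.1 + l p.2 == a]]|.

Definition cordial_labeling (A : zmodType) (V : finType) (e : rel V)
  (l : V -> A) : Prop :=
  forall a1 a2 : A, (fV l a1 <= (fV l a2).+1)%N /\ (fE e l a1 <= (fE e l a2).+1)%N.

Definition cordial (A : zmodType) (V : finType) (e : rel V) : Prop :=
  exists l : V -> A, cordial_labeling e l.

Definition Klein : zmodType := ('Z_2 * 'Z_2)%type.

From mathcomp Require Import all_boot all_order all_algebra zify.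
Set Implicit Arguments. Unset Strict Implicit. Unset Printing Implicit Defensive.
Import GRing.Theory.

(** A cordial labeling of a tree T on 4k vertices uses each element of the Klein
    group exactly k times; as T has 4k - 1 edges, every edge label occurs k times
    except one label d, which occurs k - 1 times.  The tree T* adds r <= 3 new
    vertices; each has at most one neighbour in T (two would close a cycle through
    T) and reaches T through at most two other new vertices.  Keep the labeling of
    T and give the new vertices distinct labels: the vertex counts stay balanced
    and only the r new edges change the edge counts.  Whether the new labels can
    be chosen to keep the edge counts balanced depends only on the adjacency among
    the new vertices, the labels of their neighbours in T, and d; these finitely
    many configurations are settled by computation. *)


Lemma divn_rem_unique n q1 q2 r1 r2 :
  r1 < n -> r2 < n -> n * q1 + r1 = n * q2 + r2 -> q1 = q2 /\ r1 = r2.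
Proof.
move=> /(edivn_eq q1) e1 /(edivn_eq q2) e2 E.
by move: e1; rewrite mulnC E mulnC e2 => -[].
Qed.

Section Balanced.
Variable A : finType.

Definition balanced (c : A -> nat) := forall a b, c a <= (c b).+1.

Lemma balanced_decomp (c : A -> nat) (a0 : A) : balanced c ->
  exists m (S : {set A}),
    [/\ #|S| < #|A|, forall a, c a = m + (a \in S) & \sum_a c a = #|A| * m + #|S|].
Proof.
move=> bal; have [amin _ min_c] := arg_minnP c (erefl true : predT a0).
pose S := [set a | c a != c amin].
have cE a : c a = c amin + (a \in S).
  by rewrite inE; have := min_c a isT; have := bal a amin; case: eqP; lia.
exists (c amin), S; split=> //.
- by rewrite -[#|A|]cardsT; apply: proper_card; apply/properP; split;
    [exact: subsetT | exists amin; rewrite ?inE ?eqxx].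
- rewrite (eq_bigr _ (fun a _ => cE a)) big_split /= sum_nat_const; congr (_ + _).
  by rewrite -sum1_card [RHS]big_mkcond; apply: eq_bigr => a _; case: (a \in S).
Qed.

Lemma balanced_const (c : A -> nat) m :
  balanced c -> \sum_a c a = #|A| * m -> forall a, c a = m.
Proof.
move=> bal sum_c a; have [m' [S [ltSA cE sumE]]] := balanced_decomp a bal.
have n_gt0 : 0 < #|A| by apply/card_gt0P; exists a.
have sum_c' : #|A| * m' + #|S| = #|A| * m + 0 by rewrite addn0 -sum_c sumE.
have [<- S0] := divn_rem_unique ltSA n_gt0 sum_c'.
by rewrite cE (cards0_eq S0) inE addn0.
Qed.

Lemma balanced_one_short (c : A -> nat) m :
  balanced c -> (\sum_a c a).+1 = #|A| * m.+1 -> exists d, forall a, c a = m + (a != d).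
Proof.
move=> bal sum_c.
have n_gt0 : 0 < #|A| by move: sum_c; case: #|A|.
have [a0 _] := card_gt0P n_gt0.
have [m' [S [ltSA cE sumE]]] := balanced_decomp a0 bal.
have sum_c' : #|A| * m' + #|S|.+1 = #|A| * m.+1 + 0 by rewrite addn0 -sum_c sumE addnS.
have SE : #|S|.+1 = #|A|.
  apply/eqP; rewrite eqn_leq ltSA leqNgt; apply/negP => lt.
  by have [_] := divn_rem_unique lt n_gt0 sum_c'.
move: sum_c'; rewrite SE addnC -mulnS -[_ * m'.+1]addn0.
move=> /(divn_rem_unique n_gt0 n_gt0) [[mE] _].
have /cards1P [d dE] : #|~: S| == 1 by rewrite cardsCs setCK; lia.
by exists d => a; rewrite cE mE -[a \in S]negbK -in_setC dE in_set1.
Qed.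

End Balanced.

Section TreeEdges.
Variables (T : finType) (e : rel T).
Hypotheses (e_irr : irreflexive e) (e_sym : symmetric e) (e_acyc : ~ has_cycle e).

Definition induced_on (S : {set T}) : rel T := [rel x y | [&& e x y, x \in S & y \in S]].

Definition connected_on (S : {set T}) :=
  forall x y, x \in S -> y \in S -> connect (induced_on S) x y.

Definition leaf_of (S : {set T}) u w :=
  [/\ u \in S, w \in S, e u w & forall w', w' \in S -> e u w' -> w' = w].

Lemma acyclic_chord u p w :
  uniq (u :: p) -> path e u p -> w \in p -> e w u -> w = head u p.
Proof.
move=> + + wp; case/splitPr: wp => [[//|a p1] p2] up_uniq up_path wu.
exfalso; apply: e_acyc; exists (u :: rcons (a :: p1) w); split.
- by rewrite /= size_rcons.
- by move: up_uniq; rewrite -cat_rcons -cat_cons cat_uniq => /and3P [].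
- rewrite /= rcons_path last_rcons wu andbT.
  by move: up_path; rewrite -cat_rcons cat_path => /andP [].
Qed.

Lemma path_induced_on S u p : path (induced_on S) u p -> all (mem S) p.
Proof. by elim: p u => [//|a p IH] u /= /andP [/and3P [_ _ ->] /IH]. Qed.

Lemma maximal_path (S : {set T}) u : u \in S -> exists u' p,
  [/\ u' \in S, uniq (u' :: p), path (induced_on S) u' p
    & forall w, w \in S -> e u' w -> w \in u' :: p].
Proof.
suff ext n p : uniq (u :: p) -> path (induced_on S) u p -> u \in S -> #|S| - size p <= n ->
    exists u' p', [/\ u' \in S, uniq (u' :: p'), path (induced_on S) u' p'
                     & forall w, w \in S -> e u' w -> w \in u' :: p'].
  by move=> uS; apply: (ext _ [::]).
elim: n p u => [|n IH] p u up_uniq up_path uS bound;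
  case: (pickP [pred w | [&& w \in S, e u w & w \notin u :: p]])
    => [w /and3P [wS uw w_new] | stuck];
  try by exists u, p; split=> // w wS uw; apply: contraFT (stuck w) => w_new; rewrite /= wS uw.
all: have wup_uniq : uniq (w :: u :: p) by rewrite /= w_new.
- have : size (w :: u :: p) <= #|S|.
    rewrite -(card_uniqP wup_uniq); apply/subset_leq_card/subsetP => x.
    by rewrite !inE => /or3P [/eqP -> | /eqP -> | /(allP (path_induced_on up_path))].
  by move: bound => /=; lia.
- apply: (IH (u :: p) w) => //; first by rewrite /= up_path andbT /induced_on /= e_sym uw wS uS.
  by move: bound => /=; lia.
Qed.

Lemma exists_leaf (S : {set T}) : 1 < #|S| -> connected_on S -> exists u w, leaf_of S u w.
Proof.
move=> S_gt1 S_conn; have [x0 x0S] : exists x, x \in S by apply/set0Pn; rewrite -card_gt0 ltnW.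
have [u [[|a p] [uS up_uniq up_path u_max]]] := maximal_path x0S.
  have [y] : exists y, y \in S :\ u.
    by apply/set0Pn; rewrite -card_gt0; move: S_gt1; rewrite (cardsD1 u) uS.
  rewrite in_setD1 => /andP [yu yS].
  case/connectP: (S_conn u y uS yS) => [[_ yE|z q /= /andP [/and3P [uz _ zS] _] _]].
    by rewrite yE eqxx in yu.
  by move: (u_max z zS uz); rewrite inE => /eqP zu; rewrite zu e_irr in uz.
move: up_path => /= /andP [/and3P [ua _ aS] ap_path].
exists u, a; split=> // w wS uw.
have := u_max w wS uw; rewrite in_cons => /orP [/eqP wu | wp]; first by rewrite wu e_irr in uw.
apply: (acyclic_chord up_uniq _ wp); last by rewrite e_sym.
by rewrite /= ua; apply: sub_path ap_path => x y /and3P [].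
Qed.

Lemma connected_on_delete_leaf (S : {set T}) u w :
  connected_on S -> leaf_of S u w -> connected_on (S :\ u).
Proof.
move=> S_conn [uS wS uw u_leaf] y z; rewrite !in_setD1 => /andP [yu yS] /andP [zu zS].
case/connectP: (S_conn y z yS zS) => p0 /shortenP [p p_path p_uniq _] zE.
apply/connectP; exists p => //; apply: (sub_in_path (P := predC1 u)) (p_path).
  move=> x x'; rewrite !inE => xu x'u /and3P [xx' xS x'S].
  by rewrite /induced_on /= !in_setD1 xu x'u xx' xS x'S.
apply/allP => x; apply: contraTneq => -> {x}; rewrite inE eq_sym (negbTE yu) /=.
apply/negP => up; move: p_uniq p_path zE; case/splitPr: up => p1 [|b p2] p_uniq p_path zE.
  by rewrite zE last_cat eqxx in zu.
move: p_path; rewrite cat_path /= => /and3P [_ /and3P [au aS _] /andP [/and3P [ub _ bS] _]].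
have aE := u_leaf _ aS (etrans (e_sym _ _) au); have bE := u_leaf _ bS ub.
move: p_uniq; rewrite -cat_cons cat_uniq => /and3P [_ /hasP []].
by exists b; [rewrite !inE eqxx orbT | rewrite bE -aE mem_last].
Qed.

Lemma degree_sum_tree (S : {set T}) :
  connected_on S -> \sum_(x in S) \sum_(y in S) e x y = (#|S|.-1).*2.
Proof.
have [n] := ubnPeq #|S|; elim: n S => [|n IH] S /eqP S_card S_conn.
  by rewrite (cards0_eq S_card) big_set0.
case: n IH S_card => [|n] IH S_card.
  by move/eqP/cards1P: S_card => [x ->]; rewrite !big_set1 e_irr.
have S_gt1 : 1 < #|S| by rewrite S_card.
have [u [w uw_leaf]] := exists_leaf S_gt1 S_conn; case: (uw_leaf) => uS wS uw u_leaf.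
have wS' : w \in S :\ u by rewrite in_setD1 wS andbT; apply: contraTneq uw => ->; rewrite e_irr.
have deg_u : \sum_(y in S) e u y = 1.
  rewrite (big_setD1 w wS) uw big1 // => y; rewrite in_setD1 => /andP [yw yS].
  by apply/eqP; rewrite eqb0; apply: contra yw => uy; rewrite (u_leaf _ yS uy).
have deg_u' : \sum_(x in S :\ u) e x u = 1.
  rewrite (big_setD1 w wS') e_sym uw big1 // => y; rewrite !in_setD1 => /and3P [yw _ yS].
  by apply/eqP; rewrite eqb0 e_sym; apply: contra yw => uy; rewrite (u_leaf _ yS uy).
have card_Su : #|S :\ u| == n.+1 by move: S_card; rewrite (cardsD1 u) uS; lia.
rewrite (big_setD1 u uS) /= deg_u (eq_bigr _ (fun x _ => big_setD1 u uS)) big_split /= deg_u'.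
by rewrite (IH _ card_Su (connected_on_delete_leaf S_conn uw_leaf)).
Qed.

End TreeEdges.

Lemma tree_degree_sum (T : finType) (e : rel T) :
  is_tree e -> \sum_x \sum_y e x y = (#|T|.-1).*2.
Proof.
case=> [[e_irr e_sym] e_conn e_acyc].
have conn_T : connected_on e [set: T].
  by move=> x y _ _; rewrite (@eq_connect _ _ e) // => a b; rewrite /induced_on /= !in_setT !andbT.
rewrite -cardsT -(degree_sum_tree e_irr e_sym e_acyc conn_T).
by apply: eq_big => [x|x _]; rewrite ?in_setT //; apply: eq_bigl => y; rewrite in_setT.
Qed.

Lemma exit_path (T : finType) (g : rel T) (N : {set T}) x y :
  connect g x y -> x \in N -> y \notin N ->
  exists p z, [/\ path g x (rcons p z), all (mem N) p, z \notin N & size p < #|N|].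
Proof.
move=> /connectP [q0 /shortenP [q q_path q_uniq _] yE] xN yN.
have q_out : has [predC N] q.
  have : y \in x :: q by rewrite yE mem_last.
  rewrite inE => /orP [/eqP yx | yq]; first by rewrite yx xN in yN.
  by apply/hasP; exists y.
case/(split_find_nth x): q_out q_path q_uniq => z p s zN /hasPn pN.
rewrite cat_path -cat_cons cat_uniq -rcons_cons rcons_uniq.
move=> /andP [p_path _] /and3P [/andP [_ xp_uniq] _ _].
exists p, z; split=> //.
  by apply/allP => w /pN /=; rewrite negbK.
rewrite -ltnS -[(size p).+1]/(size (x :: p)) -(card_uniqP xp_uniq).
apply/subset_leq_card/subsetP => w; rewrite inE => /orP [/eqP -> //|].
by move/pN; rewrite /= negbK.
Qed.

(** * Cordial labelings of trees *)

Lemma card_pairs (T : finType) (P : T -> T -> bool) :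
  #|[set p : T * T | P p.1 p.2]| = \sum_x \sum_y P x y.
Proof.
rewrite -sum1_card big_mkcond /= pair_big /=; apply: eq_bigr => [[x y]] _.
by rewrite in_set /=; case: (P x y).
Qed.

Lemma card_Klein : #|Klein| = 4.
Proof. by rewrite card_prod card_ord. Qed.

Section CordialCounts.
Variables (T : finType) (e : rel T) (l : T -> Klein).

Lemma fVE a : fV l a = \sum_x (l x == a).
Proof.
by rewrite /fV -sum1_card big_mkcond; apply: eq_bigr => x _; rewrite inE; case: (_ == _).
Qed.

Lemma fV_sum : \sum_a fV l a = #|T|.
Proof.
under eq_bigr => a _ do rewrite fVE.
rewrite exchange_big /= -sum1_card; apply: eq_bigr => x _.
by rewrite (bigD1 (l x)) //= eqxx big1 // => b; rewrite eq_sym => /negbTE ->.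
Qed.

Lemma fE_double a : irreflexive e -> symmetric e ->
  (fE e l a).*2 = \sum_x \sum_y (e x y && (l x + l y == a)%R).
Proof.
move=> e_irr e_sym.
rewrite /fE (card_pairs (fun x y =>
  [&& e x y, (enum_rank x < enum_rank y)%N & (l x + l y == a)%R])).
rewrite -addnn {2}exchange_big -big_split /=; apply: eq_bigr => x _.
rewrite -big_split /=; apply: eq_bigr => y _.
case xy: (e x y); last by rewrite /= e_sym xy.
rewrite e_sym xy /= addrC; case: ltngtP => [_|_|/val_inj/enum_rank_inj yx]; rewrite /= ?addn0 //.
by rewrite yx e_irr in xy.
Qed.

Lemma tree_fE_sum : is_tree e -> \sum_a fE e l a = #|T|.-1.
Proof.
move=> e_tree; have [[e_irr e_sym] _ _] := e_tree.
apply: double_inj; rewrite -(tree_degree_sum e_tree) -muln2 big_distrl /=.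
under eq_bigr => a _ do rewrite muln2 fE_double //.
rewrite exchange_big; apply: eq_bigr => x _; rewrite exchange_big; apply: eq_bigr => y _.
case: (e x y); last by rewrite big1.
by rewrite (bigD1 (l x + l y)%R) //= eqxx big1 // => b; rewrite eq_sym => /negbTE ->.
Qed.

Lemma cordial_fV_const k : cordial_labeling e l -> #|T| = 4 * k -> forall a, fV l a = k.
Proof.
move=> l_cord T_card; apply: balanced_const; first by move=> a b; case: (l_cord a b).
by rewrite fV_sum card_Klein.
Qed.

Lemma cordial_tree_fE k : is_tree e -> cordial_labeling e l -> #|T| = 4 * k.+1 ->
  exists d, forall a, fE e l a = k + (a != d).
Proof.
move=> e_tree l_cord T_card; apply: balanced_one_short; first by move=> a b; case: (l_cord a b).
by rewrite tree_fE_sum // T_card card_Klein prednK.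
Qed.

End CordialCounts.

Lemma cordial_card0 (A : zmodType) (T : finType) (e : rel T) : #|T| = 0 -> cordial A e.
Proof.
move=> T0; have card0 (X : finType) (S : {set X}) : #|X| = 0 -> #|S| = 0.
  by move=> X0; apply/eqP; rewrite -leqn0 -X0 max_card.
by exists (fun _ => 0%R) => a1 a2; rewrite /fV /fE !card0 // card_prod T0.
Qed.

(** * Configurations of at most three new vertices *)

(* A computable copy of the Klein group: vm_compute evaluates the generic
   operations of 'Z_2 * 'Z_2 far more slowly. *)
Notation K4 := (bool * bool)%type.

Definition xor2 (x y : K4) : K4 := (x.1 (+) y.1, x.2 (+) y.2).

Definition K4_elems : seq K4 := [:: (false, false); (false, true); (true, false); (true, true)].

Lemma mem_K4_elems x : x \in K4_elems.
Proof. by case: x => [[] []]. Qed.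

Definition K4_options : seq (option K4) := None :: map Some K4_elems.

Lemma mem_K4_options o : o \in K4_options.
Proof. by case: o => [x|] //; rewrite inE (mem_map (@Some_inj _)) mem_K4_elems orbT. Qed.

Definition to_K4 (a : Klein) : K4 := (a.1 != 0%R, a.2 != 0%R).
Definition of_K4 (x : K4) : Klein := (x.1%:R, x.2%:R)%R.

Lemma Z2_cases (x : 'Z_2) : x = 0%R \/ x = 1%R.
Proof. by case: x => [[|[|//]] ?]; [left | right]; apply: val_inj. Qed.

Lemma to_K4K : cancel to_K4 of_K4.
Proof. by case=> x y; case: (Z2_cases x) => ->; case: (Z2_cases y) => ->. Qed.

Lemma of_K4K : cancel of_K4 to_K4.
Proof. by case=> [[] []]. Qed.

Lemma to_K4_inj : injective to_K4. Proof. exact: can_inj to_K4K. Qed.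

Lemma to_K4D a b : to_K4 (a + b)%R = xor2 (to_K4 a) (to_K4 b).
Proof.
case: a b => [x y] [x' y'].
by case: (Z2_cases x) => ->; case: (Z2_cases y) => ->;
   case: (Z2_cases x') => ->; case: (Z2_cases y') => ->.
Qed.

Lemma to_K4_eqD a b c : (a + b == c)%R = (xor2 (to_K4 a) (to_K4 b) == to_K4 c).
Proof. by rewrite -to_K4D (inj_eq to_K4_inj). Qed.

Definition adj3 (b01 b02 b12 : bool) : rel nat := fun i j =>
  match i, j with
  | 0, 1 | 1, 0 => b01
  | 0, 2 | 2, 0 => b02
  | 1, 2 | 2, 1 => b12
  | _, _ => false
  end.

Definition fun3 (T : Type) (x0 x1 x2 : T) (i : nat) : T := nth x0 [:: x0; x1; x2] i.

Definition triples (T : Type) (s : seq T) : seq (T * T * T) :=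
  [seq (xy, z) | xy <- [seq (x, y) | x <- s, y <- s], z <- s].

Lemma mem_triples (T : eqType) (s : seq T) x y z :
  x \in s -> y \in s -> z \in s -> (x, y, z) \in triples s.
Proof. by move=> xs ys zs; rewrite allpairs_f // allpairs_f. Qed.

(* The new vertices are numbered 0, ..., r - 1; [adj] is their adjacency and
   [att i] the label of the neighbour of i in T, if any.  [d] is None when T is
   empty, and otherwise the edge label that T uses once less than the others. *)
Definition admissible (r : nat) (adj : rel nat) (att : nat -> option K4) (d : option K4) :=
  let I := iota 0 r in
  if d is Some _ then
    all (fun i => all (fun j => adj i j ==> ~~ (isSome (att i) && isSome (att j))) I) I &&
    all (fun i => isSome (att i) || has (fun j => adj i j && (isSome (att j) ||
                    has (fun k => adj j k && isSome (att k)) I)) I) I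
  else all (fun i => ~~ isSome (att i)) I.

Definition anchor_edge (c : option K4) (x a : K4) : nat :=
  if c is Some c then xor2 c x == a else false.

(* Twice the number of new edges labelled [a]: an edge into T is counted twice
   at its new end, an edge between new vertices once at each end. *)
Definition new_edges_dbl r (adj : rel nat) att (g : nat -> K4) (a : K4) : nat :=
  let I := iota 0 r in
  sumn [seq (anchor_edge (att i) (g i) a).*2 +
            count (fun j => adj i j && (xor2 (g i) (g j) == a)) I | i <- I].

Definition profile (d : option K4) (a : K4) : nat := if d is Some d then a != d else false.

Definition within2 (s : seq nat) := all (fun x => all (fun y => x <= y + 2) s) s.

(* Written with [if] and, below, [find] rather than [&&], [==>] and [has], whose
   arguments vm_compute evaluates eagerly. *)
Definition good_extension r adj att d (g : nat -> K4) :=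
  if all (fun a => count (fun i => g i == a) (iota 0 r) <= 1) K4_elems then
    within2 [seq (profile d a).*2 + new_edges_dbl r adj att g a | a <- K4_elems]
  else false.

Definition extension_check (r : nat) : bool :=
  let configs := triples [:: true; false] in
  let anchors := triples K4_options in
  let labels := triples K4_elems in
  all (fun '(b01, b02, b12) => all (fun '(o0, o1, o2) => all (fun d =>
    if admissible r (adj3 b01 b02 b12) (fun3 o0 o1 o2) d then
      find (fun '(g0, g1, g2) =>
              good_extension r (adj3 b01 b02 b12) (fun3 o0 o1 o2) d (fun3 g0 g1 g2))
           labels < size labels
    else true)
  K4_options) anchors) configs.

Lemma extension_check_upto3 : all extension_check (iota 0 4).
Proof. by vm_compute. Qed.

Section Congruence.
Variables (r : nat) (adj adj' : rel nat) (att att' : nat -> option K4).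
Hypothesis eq_adj : forall i j, i < r -> j < r -> adj i j = adj' i j.
Hypothesis eq_att : forall i, i < r -> att i = att' i.

Let in_range i : i \in iota 0 r -> i < r. Proof. by rewrite mem_iota. Qed.

Lemma eq_admissible d : admissible r adj att d = admissible r adj' att' d.
Proof.
rewrite /admissible; case: d => [_|]; last by apply: eq_in_all => i /in_range ir; rewrite eq_att.
congr andb; apply: eq_in_all => i /in_range ir; rewrite eq_att //.
  by apply: eq_in_all => j /in_range jr; rewrite eq_adj // eq_att.
congr orb; apply: eq_in_has => j /in_range jr; rewrite eq_adj // eq_att //.
by congr (_ && (_ || _)); apply: eq_in_has => k /in_range kr; rewrite eq_adj // eq_att.
Qed.

Lemma eq_good_extension d g : good_extension r adj att d g = good_extension r adj' att' d g.
Proof.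
rewrite /good_extension /new_edges_dbl; congr (if _ then within2 _ else _).
apply: eq_map => a; congr (_ + sumn _); apply/eq_in_map => i /in_range ir.
by rewrite eq_att //; congr (_ + _); apply: eq_in_count => j /in_range jr; rewrite eq_adj.
Qed.

End Congruence.

Lemma extension_check_sound r b01 b02 b12 o0 o1 o2 d :
  extension_check r -> admissible r (adj3 b01 b02 b12) (fun3 o0 o1 o2) d ->
  exists g0 g1 g2, good_extension r (adj3 b01 b02 b12) (fun3 o0 o1 o2) d (fun3 g0 g1 g2).
Proof.
move=> + adm.
have mem_bool b : b \in [:: true; false] by case: b.
move=> /allP /(_ _ (mem_triples (mem_bool b01) (mem_bool b02) (mem_bool b12))).
move=> /allP /(_ _ (mem_triples (mem_K4_options o0) (mem_K4_options o1) (mem_K4_options o2))).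
(* [/=] would unfold the enumerations. *)
move=> /allP /(_ _ (mem_K4_options d)); cbv beta iota zeta; rewrite adm -has_find.
by case/hasP => [[[g0 g1] g2] _ good]; exists g0, g1, g2.
Qed.

Lemma admissible_solvable r (adj : rel nat) att d :
  r <= 3 -> irreflexive adj -> symmetric adj -> admissible r adj att d ->
  exists g, good_extension r adj att d g.
Proof.
move=> r_le3 adj_irr adj_sym adm.
pose adj' := adj3 (adj 0 1) (adj 0 2) (adj 1 2); pose att' := fun3 (att 0) (att 1) (att 2).
have eq_adj i j : i < r -> j < r -> adj' i j = adj i j.
  move=> ir jr; have [i3 j3] : i < 3 /\ j < 3 by lia.
  by case: i j {ir jr} i3 j3 => [|[|[|//]]] [|[|[|//]]] _ _; rewrite /adj' /= ?adj_irr // adj_sym.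
have eq_att i : i < r -> att' i = att i.
  move=> ir; have : i < 3 by lia.
  by case: i {ir} => [|[|[|//]]].
have check_r : extension_check r.
  by apply: (allP extension_check_upto3); rewrite mem_iota ltnS.
rewrite -(eq_admissible eq_adj eq_att) in adm.
have [g0 [g1 [g2 good]]] := extension_check_sound check_r adm.
by exists (fun3 g0 g1 g2); rewrite -(eq_good_extension eq_adj eq_att).
Qed.

(** * Extending the labeling from T to T* *)

Lemma tree_fE_profile (T : finType) (e : rel T) (l : T -> Klein) k :
  is_tree e -> cordial_labeling e l -> #|T| = 4 * k ->
  exists q d, (forall a, fE e l a = q + profile d (to_K4 a)) /\ (d == None) = (#|T| == 0).
Proof.
case: k => [|k] e_tree l_cord T_card.
  exists 0, None; split; last by rewrite T_card.
  move=> a; rewrite addn0 /fE; apply: eq_card0 => -[x y].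
  by have := card0_eq T_card x; rewrite !inE.
have [d fE_l] := cordial_tree_fE e_tree l_cord T_card.
exists k, (Some (to_K4 d)); split; last by rewrite T_card.
by move=> a; rewrite fE_l /= (inj_eq to_K4_inj).
Qed.

Section Extension.
Variables (V W : finType) (e : rel V) (e' : rel W) (f : V -> W).
Hypotheses (e_tree : is_tree e) (e'_tree : is_tree e').
Hypotheses (f_inj : injective f) (f_induced : forall x y, e' (f x) (f y) = e x y).

Definition new_vertices : {set W} := ~: [set f v | v : V].

Lemma f_notin_new v : f v \notin new_vertices.
Proof. by rewrite inE negbK imset_f. Qed.

Lemma notin_newP w : w \notin new_vertices -> exists v, w = f v.
Proof. by rewrite inE negbK => /imsetP [v _ ->]; exists v. Qed.

Lemma card_new_vertices : #|new_vertices| = #|W| - #|V|.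
Proof. by rewrite cardsCs setCK card_imset // cardT ?size_enum_ord. Qed.

Definition anchor (w : W) : option V := [pick v | e' w (f v)].

Lemma anchor_some w u : e' w (f u) -> isSome (anchor w).
Proof. by rewrite /anchor; case: pickP => // /(_ u) ->. Qed.

(* Joining the two anchors through T would close a cycle. *)
Lemma anchored_path x s u v :
  uniq (x :: s) -> path e' x s -> all (mem new_vertices) (x :: s) ->
  e' x (f u) -> e' (last x s) (f v) -> s = [::] /\ u = v.
Proof.
move=> xs_uniq xs_path xs_new xu sv.
have [[_ e_conn _] [[_ e'_sym] _ e'_acyc]] := (e_tree, e'_tree).
case/connectP: (e_conn v u) => p0 /shortenP [p p_path p_uniq _] uE.
suff : (s == [::]) && (p == [::]) by case/andP => /eqP -> /eqP p0E; rewrite uE p0E.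
apply/negPn/negP => nontrivial; apply: e'_acyc.
exists (x :: s ++ f v :: map f p); split.
- rewrite /= size_cat /= size_map; case: s nontrivial {xs_uniq xs_path xs_new sv} => [|a s].
    by case: p {p_path p_uniq uE}.
  by rewrite /=; lia.
- rewrite -cat_cons cat_uniq xs_uniq -map_cons (map_inj_uniq f_inj) p_uniq andbT.
  apply/hasPn => _ /mapP [t _ ->]; apply: contraNN (f_notin_new t).
  exact: (allP xs_new).
- rewrite /= rcons_cat cat_path xs_path /= sv rcons_path path_map (eq_path f_induced) p_path.
  by rewrite last_map -uE e'_sym.
Qed.

Lemma anchor_unique x u v : x \in new_vertices -> e' x (f u) -> e' x (f v) -> u = v.
Proof. by move=> xN xu xv; have [] := anchored_path (s := [::]) _ _ _ xu xv; rewrite //= xN. Qed.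

Lemma anchored_nonadjacent x y u v :
  x \in new_vertices -> y \in new_vertices -> e' x y -> e' x (f u) -> e' y (f v) -> False.
Proof.
have [[e'_irr _] _ _] := e'_tree.
move=> xN yN xy xu yv; have xy_neq : x != y by apply: contraTneq xy => ->; rewrite e'_irr.
have [] // := anchored_path (s := [:: y]) _ _ _ xu yv.
- by rewrite /= inE xy_neq.
- by rewrite /= xy.
- by rewrite /= xN yN.
Qed.

Lemma near_anchor (v0 : V) x : #|new_vertices| <= 3 -> x \in new_vertices ->
  isSome (anchor x) \/
  exists2 y, y \in new_vertices & e' x y /\
    (isSome (anchor y) \/ exists2 z, z \in new_vertices & e' y z /\ isSome (anchor z)).
Proof.
have [_ e'_conn _] := e'_tree.
move=> new_le3 xN.
have [p [z [p_path pN zN p_size]]] := exit_path (e'_conn x (f v0)) xN (f_notin_new v0).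
have [u zE] := notin_newP zN.
move: p_path pN; rewrite zE rcons_path => /andP [p_path /anchor_some anchored].
case: p p_size p_path anchored => [|y [|y' [|y'' q]]] /=.
- by left.
- by rewrite !andbT => _ xy ya yN; right; exists y => //; split; [|left].
- rewrite !andbT => _ /andP [xy yy'] y'a /andP [yN y'N]; right; exists y => //.
  by split=> //; right; exists y'.
- by move=> /= ?; lia.
Qed.

Variable w0 : W.

Definition new_vertex (i : nat) : W := nth w0 (enum new_vertices) i.

Definition new_adj : rel nat := fun i j => e' (new_vertex i) (new_vertex j).

Definition new_anchor (l : V -> Klein) (i : nat) : option K4 :=
  omap (to_K4 \o l) (anchor (new_vertex i)).

Lemma new_vertex_new i : i < #|new_vertices| -> new_vertex i \in new_vertices.
Proof. by move=> ir; rewrite -mem_enum mem_nth // -cardE. Qed.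

Lemma new_vertex_index w : w \in new_vertices ->
  index w (enum new_vertices) < #|new_vertices| /\ new_vertex (index w (enum new_vertices)) = w.
Proof. by rewrite -mem_enum => wN; rewrite /new_vertex nth_index // cardE index_mem. Qed.

Lemma has_new_vertex (P : pred nat) w :
  w \in new_vertices -> P (index w (enum new_vertices)) -> has P (iota 0 #|new_vertices|).
Proof.
move=> /new_vertex_index [wr _] Pw; apply/hasP; exists (index w (enum new_vertices)) => //.
by rewrite mem_iota.
Qed.

Lemma admissible_new l d :
  #|new_vertices| <= 3 -> (d == None) = (#|V| == 0) ->
  admissible #|new_vertices| new_adj (new_anchor l) d.
Proof.
move=> r_le3 dE; have I_new i : i \in iota 0 #|new_vertices| -> new_vertex i \in new_vertices.
  by rewrite mem_iota => /andP [_ /new_vertex_new].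
have anchorE i : isSome (new_anchor l i) = isSome (anchor (new_vertex i)).
  by rewrite /new_anchor; case: anchor.
rewrite /admissible; case: d dE => [d|] /= dE.
  have [v0 _] : exists v0 : V, true by apply/card_gt0P; rewrite lt0n -dE.
  apply/andP; split.
    apply/allP => i iI; apply/allP => j jI; apply/implyP => ij; rewrite !anchorE /anchor.
    case: pickP => [u iu|//]; case: pickP => [v jv|//]; exfalso.
    exact: anchored_nonadjacent (I_new i iI) (I_new j jI) ij iu jv.
  apply/allP => i iI; rewrite anchorE.
  case: (near_anchor v0 r_le3 (I_new i iI)) => [-> // | [y yN [xy yfar]]].
  apply/orP; right; apply: (has_new_vertex yN).
  have [_ yE] := new_vertex_index yN; rewrite /new_adj yE xy anchorE yE /=.
  case: yfar => [-> // | [z zN [yz za]]].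
  apply/orP; right; apply: (has_new_vertex zN).
  by have [_ zE] := new_vertex_index zN; rewrite zE yz anchorE zE.
apply/allP => i _; rewrite anchorE /anchor; case: pickP => // v _.
by move/esym/eqP/card0_eq: dE => /(_ v).
Qed.

Lemma good_extension_exists l d :
  #|new_vertices| <= 3 -> (d == None) = (#|V| == 0) ->
  exists g, good_extension #|new_vertices| new_adj (new_anchor l) d g.
Proof.
have [[e'_irr e'_sym] _ _] := e'_tree.
move=> new_le3 dE; apply: admissible_solvable (admissible_new l new_le3 dE) => //.
  by move=> i; apply: e'_irr.
by move=> i j; apply: e'_sym.
Qed.

Definition extend_labeling (l : V -> Klein) (g : nat -> K4) (w : W) : Klein :=
  if [pick v | f v == w] is Some v then l v else of_K4 (g (index w (enum new_vertices))).

Lemma extend_labeling_f l g v : extend_labeling l g (f v) = l v.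
Proof. by rewrite /extend_labeling; case: pickP => [u /eqP/f_inj -> // | /(_ v)]; rewrite eqxx. Qed.

Lemma extend_labeling_new l g i :
  i < #|new_vertices| -> extend_labeling l g (new_vertex i) = of_K4 (g i).
Proof.
move=> ir; rewrite /extend_labeling; case: pickP => [u /eqP uE | _].
  by have := new_vertex_new ir; rewrite -uE (negbTE (f_notin_new u)).
by rewrite /new_vertex index_uniq ?enum_uniq // -cardE.
Qed.

Lemma sum_over_extension (F : W -> nat) :
  \sum_w F w = \sum_v F (f v) + \sum_(i <- iota 0 #|new_vertices|) F (new_vertex i).
Proof.
rewrite (bigID (mem new_vertices)) /= addnC; congr (_ + _).
  rewrite (eq_bigl (mem [set f v | v : V])) => [|w]; last by rewrite /= inE negbK.
  by rewrite big_imset //=; apply: in2W.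
by rewrite -big_enum (big_nth w0) -cardE /index_iota subn0.
Qed.

Lemma fV_extend l g a : fV (extend_labeling l g) a =
  fV l a + count (fun i => g i == to_K4 a) (iota 0 #|new_vertices|).
Proof.
rewrite !fVE sum_over_extension -sumn_count sumnE big_map.
congr (_ + _); first by apply: eq_bigr => v _; rewrite extend_labeling_f.
apply: eq_big_seq => i; rewrite mem_iota => /andP [_ ir].
by rewrite extend_labeling_new // (can2_eq of_K4K to_K4K).
Qed.

Lemma sum_anchor_edges l g a i : i < #|new_vertices| ->
  \sum_v (e' (new_vertex i) (f v) &&
          (extend_labeling l g (new_vertex i) + extend_labeling l g (f v) == a)%R)
  = anchor_edge (new_anchor l i) (g i) (to_K4 a).
Proof.
move=> ir; rewrite /new_anchor /anchor; case: pickP => [u iu | no_anchor] /=; last first.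
  by rewrite big1 // => v _; rewrite no_anchor.
rewrite (bigD1 u) //= iu addrC to_K4_eqD extend_labeling_new // extend_labeling_f of_K4K.
rewrite big1 ?addn0 // => v vu; case iv: (e' _ (f v)) => //=; move: vu.
by rewrite (anchor_unique (new_vertex_new ir) iv iu) eqxx.
Qed.

Lemma fE_extend l g a :
  (fE e' (extend_labeling l g) a).*2 =
  (fE e l a).*2 + new_edges_dbl #|new_vertices| new_adj (new_anchor l) g (to_K4 a).
Proof.
have [[e_irr e_sym] _ _] := e_tree; have [[e'_irr e'_sym] _ _] := e'_tree.
set L := extend_labeling l g; set I := iota 0 #|new_vertices|.
have I_lt i : i \in I -> i < #|new_vertices| by rewrite mem_iota => /andP [].
have L_new i : i \in I -> to_K4 (L (new_vertex i)) = g i.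
  by move/I_lt => ir; rewrite /L extend_labeling_new ?of_K4K.
have old_old : \sum_v \sum_v' (e' (f v) (f v') && (L (f v) + L (f v') == a)%R) = (fE e l a).*2.
  rewrite fE_double //; apply: eq_bigr => v _; apply: eq_bigr => v' _.
  by rewrite f_induced /L !extend_labeling_f.
have old_new : \sum_v \sum_(i <- I) (e' (f v) (new_vertex i) && (L (f v) + L (new_vertex i) == a)%R)
    = \sum_(i <- I) \sum_v (e' (new_vertex i) (f v) && (L (new_vertex i) + L (f v) == a)%R).
  by rewrite exchange_big; apply: eq_bigr => i _; apply: eq_bigr => v _; rewrite e'_sym addrC.
have new_new i : i \in I ->
    \sum_(j <- I) (e' (new_vertex i) (new_vertex j) && (L (new_vertex i) + L (new_vertex j) == a)%R)
    = count (fun j => new_adj i j && (xor2 (g i) (g j) == to_K4 a)) I.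
  move=> iI; rewrite -sumn_count sumnE big_map; apply: eq_big_seq => j jI.
  by rewrite to_K4_eqD !L_new.
rewrite fE_double // sum_over_extension.
under eq_bigr do rewrite sum_over_extension.
under [X in _ + X]eq_bigr do rewrite sum_over_extension.
rewrite !big_split /= old_old old_new /new_edges_dbl sumnE big_map big_split /=.
rewrite (eq_big_seq _ (fun i iI => sum_anchor_edges l g a (I_lt i iI))) (eq_big_seq _ new_new).
under [in RHS]eq_bigr do rewrite -addnn.
by rewrite big_split /= /I; lia.
Qed.

Lemma extension_cordial l g k q d :
  (forall a, fV l a = k) -> (forall a, fE e l a = q + profile d (to_K4 a)) ->
  good_extension #|new_vertices| new_adj (new_anchor l) d g ->
  cordial_labeling e' (extend_labeling l g).
Proof.
move=> fV_l fE_l; rewrite /good_extension; case: ifP => // /allP g_inj /allP g_within a1 a2.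
split; first by rewrite !fV_extend !fV_l; have := g_inj _ (mem_K4_elems (to_K4 a1)); lia.
have /allP := g_within _ (map_f _ (mem_K4_elems (to_K4 a1))).
move=> /(_ _ (map_f _ (mem_K4_elems (to_K4 a2)))).
by have := fE_extend l g a1; have := fE_extend l g a2; rewrite !fE_l; lia.
Qed.

End Extension.

Unset Implicit Arguments.

Theorem lemma4p3 (V W : finType) (e : rel V) (e' : rel W) (k : nat) :
  is_tree e -> cordial Klein e -> #|V| = (4 * k)%N ->
  is_tree e' -> induced_subgraph e e' -> (#|W| <= 4 * k + 3)%N ->
  cordial Klein e'.
Proof.
move=> e_tree [l l_cord] V_card e'_tree [f [f_inj f_induced]] W_card.
have [w0 _ | W_empty] := pickP (@predT W); last by apply: cordial_card0; apply: eq_card0.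
have [q [d [fE_l dE]]] := tree_fE_profile e_tree l_cord V_card.
have new_le3 : #|new_vertices f| <= 3 by rewrite card_new_vertices //; lia.
have [g good] := good_extension_exists e_tree e'_tree f_inj f_induced w0 l new_le3 dE.
exists (extend_labeling f l g).
exact: (extension_cordial e_tree e'_tree f_inj f_induced
  (cordial_fV_const l_cord V_card) fE_l good).
Qed.
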